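(* Let $0<c_1\le c_2$ be constants, let $n$ be sufficiently large, let $t\in[1,n^{0.1}]$, and let $H$ be an undirected graph on $n$ vertices in which every vertex has degree between $c_1t$ and $c_2t$ and which has no cycle of length at most $8$. Then any two distinct maximal cliques of $H^2$ have at most one vertex in common.
   Context: $H^2$ (the square of $H$) is the graph on the vertex set of $H$ in which $u\neq v$ are adjacent if and only if there is a path of length exactly $2$ between $u$ and $v$ in $H$. *)

From mathcomp Require Import all_boot.
From Stdlib Require Import Reals.
Set Implicit Arguments. Unset Strict Implicit. Unset Printing Implicit Defensive.

Definition simple_graph (V : finType) (e : rel V) : Prop :=
  symmetric e /\ irreflexive e.

Definition deg (V : finType) (e : rel V) (v : V) : nat := #|[set w | e v w]|.

Definition no_cycle_upto (V : finType) (e : rel V) (k : nat) : Prop :=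
  forall s : seq V, uniq s -> (3 <= size s <= k)%N -> ~~ cycle e s.

Definition sq_rel (V : finType) (e : rel V) : rel V :=
  fun u v => (u != v) && [exists w, e u w && e w v].

Definition is_clique (V : finType) (r : rel V) (K : {set V}) : Prop :=
  forall u v, u \in K -> v \in K -> u != v -> r u v.

Definition maximal_clique (V : finType) (r : rel V) (K : {set V}) : Prop :=
  is_clique r K /\ (forall K' : {set V}, is_clique r K' -> K \subset K' -> K' = K).

(* A common neighbour w of two vertices x, y at distance 2 is unique, and in a
   graph without cycles of length 3, 4 or 6 it is adjacent to every vertex z at
   distance 2 from both x and y: if the middle vertices a of x, z and b of y, z
   differ from w, they close a 4-cycle x w y a or a 6-cycle x w y b z a.
   Hence a clique of H^2 containing x and y lies in the neighbourhood N(w),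
   which is itself a clique of H^2, so every maximal clique through x and y
   equals N(w). *)
From mathcomp Require Import all_boot.
From Stdlib Require Import Reals.

Set Implicit Arguments.
Unset Strict Implicit.
Unset Printing Implicit Defensive.

Lemma no_cycle_uptoW (V : finType) (e : rel V) (k l : nat) :
  (k <= l)%N -> no_cycle_upto e l -> no_cycle_upto e k.
Proof.
move=> le_kl ncl s us /andP [ge3 lek]; apply: ncl => //.
by rewrite ge3 (leq_trans lek le_kl).
Qed.

Section Girth7.

Variables (V : finType) (e : rel V).
Hypotheses (e_sym : symmetric e) (e_irr : irreflexive e).
Hypothesis no_short_cycle : no_cycle_upto e 6.

Lemma edge_neq (u v : V) : e u v -> u != v.
Proof. by apply: contraTneq => ->; rewrite e_irr. Qed.

Lemma no_triangle (u v w : V) : e u v -> e v w -> e w u -> False.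
Proof.
move=> uv vw wu.
have uniq_uvw : uniq [:: u; v; w].
  by rewrite /= !inE negb_or (edge_neq uv) (edge_neq vw) eq_sym (edge_neq wu).
by move: (no_short_cycle uniq_uvw isT); rewrite /= uv vw wu.
Qed.

Lemma common_neighbor_unique (u v w1 w2 : V) :
  u != v -> e u w1 -> e w1 v -> e u w2 -> e w2 v -> w1 = w2.
Proof.
move=> nuv uw1 w1v uw2 w2v; apply/eqP/negPn/negP => nw12.
have uniq_cycle : uniq [:: u; w1; v; w2].
  rewrite /= !inE !negb_or nuv nw12 (edge_neq uw1) (edge_neq uw2) (edge_neq w1v).
  by rewrite eq_sym (edge_neq w2v).
by move: (no_short_cycle uniq_cycle isT); rewrite /= uw1 w1v e_sym w2v e_sym uw2.
Qed.

Lemma sq_triangle_mid_adj (x y z w a b : V) :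
  x != y -> x != z -> y != z ->
  e x w -> e w y -> e x a -> e a z -> e y b -> e b z -> e w z.
Proof.
move=> nxy nxz nyz xw wy xa az yb bz.
have [-> // | nwa] := eqVneq w a.
have [-> // | nwb] := eqVneq w b.
have nba : b != a.
  apply: contra_neq nwa => eq_ba.
  by apply: (common_neighbor_unique nxy) => //; rewrite -eq_ba e_sym.
have nxb : x != b.
  by apply/eqP => xb; apply: (no_triangle xw wy); rewrite xb.
have nwz : w != z.
  by apply/eqP => wz; apply: (no_triangle xa az); rewrite -wz e_sym.
have nya : y != a.
  by apply/eqP => ya; apply: (no_triangle yb bz); rewrite e_sym ya.
have uniq_cycle : uniq [:: x; w; y; b; z; a].
  rewrite /= !inE !negb_or nxy nxz nyz nwa nwb nba nxb nwz nya.
  rewrite (edge_neq xw) (edge_neq xa) (edge_neq wy) (edge_neq yb) (edge_neq bz).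
  by rewrite eq_sym (edge_neq az).
exfalso; move: (no_short_cycle uniq_cycle isT).
by rewrite /= xw wy yb bz e_sym az e_sym xa.
Qed.

Lemma neighborhood_sq_clique (w : V) : is_clique (sq_rel e) [set v | e w v].
Proof.
move=> u v; rewrite !inE => wu wv nuv; rewrite /sq_rel nuv /=.
by apply/existsP; exists w; rewrite e_sym wu wv.
Qed.

Lemma sq_clique_sub_neighborhood (K : {set V}) (x y w : V) :
  is_clique (sq_rel e) K -> x \in K -> y \in K -> x != y ->
  e x w -> e w y -> K \subset [set v | e w v].
Proof.
move=> clK xK yK nxy xw wy; apply/subsetP => z zK; rewrite inE.
have [<- | nxz] := eqVneq x z; first by rewrite e_sym.
have [<- // | nyz] := eqVneq y z.
have /andP [_ /existsP [a /andP [xa az]]] := clK x z xK zK nxz.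
have /andP [_ /existsP [b /andP [yb bz]]] := clK y z yK zK nyz.
exact: (sq_triangle_mid_adj nxy nxz nyz xw wy xa az yb bz).
Qed.

Lemma maximal_sq_clique_eq_neighborhood (K : {set V}) (x y w : V) :
  maximal_clique (sq_rel e) K -> x \in K -> y \in K -> x != y ->
  e x w -> e w y -> K = [set v | e w v].
Proof.
move=> [clK maxK] xK yK nxy xw wy; apply/esym/maxK.
  exact: neighborhood_sq_clique.
exact: sq_clique_sub_neighborhood clK xK yK nxy xw wy.
Qed.

Lemma maximal_sq_cliques_meet_le1 (K1 K2 : {set V}) :
  maximal_clique (sq_rel e) K1 -> maximal_clique (sq_rel e) K2 -> K1 != K2 ->
  (#|K1 :&: K2| <= 1)%N.
Proof.
move=> maxK1 maxK2 /negP neqK12; rewrite leqNgt; apply/negP.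
move=> /card_gt1P [x [y []]]; rewrite !inE => /andP [xK1 xK2] /andP [yK1 yK2] nxy.
have /andP [_ /existsP [w /andP [xw wy]]] := maxK1.1 x y xK1 yK1 nxy.
apply: neqK12.
rewrite (maximal_sq_clique_eq_neighborhood maxK1 xK1 yK1 nxy xw wy).
by rewrite (maximal_sq_clique_eq_neighborhood maxK2 xK2 yK2 nxy xw wy).
Qed.

End Girth7.

Theorem lemmaA4 :
  forall c1 c2 : R, (0 < c1)%R -> (c1 <= c2)%R ->
  exists N : nat, forall n : nat, (N <= n)%N ->
  forall t : R, (1 <= t)%R -> (t <= Rpower (INR n) (1/10))%R ->
  forall (V : finType) (e : rel V),
    #|V| = n ->
    simple_graph e ->
    (forall v : V, (c1 * t <= INR (deg e v))%R /\ (INR (deg e v) <= c2 * t)%R) ->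
    no_cycle_upto e 8 ->
    forall K1 K2 : {set V},
      maximal_clique (sq_rel e) K1 -> maximal_clique (sq_rel e) K2 -> K1 != K2 ->
      (#|K1 :&: K2| <= 1)%N.
Proof.
move=> c1 c2 _ _; exists 0%N => n _ t _ _ V e _ [e_sym e_irr] _ no_cycle8.
exact: maximal_sq_cliques_meet_le1 e_sym e_irr (no_cycle_uptoW _ no_cycle8).
Qed.
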